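(* Assume $g$ satisfies (Hg) and (Hg1), and let $k>0$. Let $(a,d)\in\overline{\mathcal D^-(k)}\cap\mathcal H$ and $\underline a\in(0,a)$. Then $(\underline a,d)\in\mathcal D^-(k)$.
   Context: Let $\mathcal H=(0,1)\times(0,\infty)$. A function $g:\mathbb R\times[0,1]\to\mathbb R$, $(u,a)\mapsto g(u;a)$, satisfies (Hg) if it is $C^1$ and for every $a\in(0,1)$: $g(0;a)=g(a;a)=g(1;a)=0$, $g'(0;a)<0$, $g'(1;a)<0$, $g'(a;a)>0$ (where $g'=\partial_u g$), $g(v;a)>0$ for $v\in(-\infty,0)\cup(a,1)$ and $g(v;a)<0$ for $v\in(0,a)\cup(1,\infty)$. (Hg1): $\partial_a g(v;a)<0$ for all $a,v\in(0,1)$. For $A\in(0,1)$ let $d^\diamond(A;a)=\inf\{d>0:\ d(k+1)(A-v)-g(A;a)\ge -g(v;a)\ \text{for all }v\in[0,A]\}$ and $\mathcal D^-(k)=\{(a,d)\in\mathcal H:\ d^\diamond(A;a)<d<g(A;a)/A$ for some $A\in(a,1)\}$; the closure is taken in $\mathbb R^2$. *)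

From Stdlib Require Import Reals.
From Coquelicot Require Import Coquelicot.
Open Scope R_scope.

Definition cont_in_strip (f : R -> R -> R) (u a : R) : Prop :=
  forall eps, 0 < eps -> exists delta, 0 < delta /\
    forall u' a', 0 <= a' <= 1 -> Rabs (u' - u) < delta -> Rabs (a' - a) < delta ->
      Rabs (f u' a' - f u a) < eps.

Definition C1_strip (g : R -> R -> R) : Prop :=
  (forall u a, 0 <= a <= 1 -> cont_in_strip g u a) /\
  exists gu ga : R -> R -> R,
    (forall u a, 0 <= a <= 1 -> cont_in_strip gu u a /\ cont_in_strip ga u a) /\
    (forall u a, 0 <= a <= 1 -> is_derive (fun v => g v a) u (gu u a)) /\
    (forall u a, 0 < a < 1 -> is_derive (fun b => g u b) a (ga u a)).

Definition dgu (g : R -> R -> R) (u a : R) : R := Derive (fun v => g v a) u.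
Definition dga (g : R -> R -> R) (v a : R) : R := Derive (fun b => g v b) a.

Definition Hg (g : R -> R -> R) : Prop :=
  C1_strip g /\
  forall a, 0 < a < 1 ->
    g 0 a = 0 /\ g a a = 0 /\ g 1 a = 0 /\
    dgu g 0 a < 0 /\ dgu g 1 a < 0 /\ 0 < dgu g a a /\
    (forall v, (v < 0 \/ (a < v < 1)) -> 0 < g v a) /\
    (forall v, ((0 < v < a) \/ 1 < v) -> g v a < 0).

Definition Hg1 (g : R -> R -> R) : Prop :=
  forall a v, 0 < a < 1 -> 0 < v < 1 -> dga g v a < 0.

(* d^diamond(A;a) = inf { d > 0 | forall v in [0,A], d(k+1)(A-v) - g(A;a) >= -g(v;a) },
   as an extended real (inf of the empty set = +oo). *)
Definition d_diamond (g : R -> R -> R) (k A a : R) : Rbar :=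
  Glb_Rbar (fun d => 0 < d /\
    forall v, 0 <= v <= A -> d * (k + 1) * (A - v) - g A a >= - g v a).

Definition in_H (a d : R) : Prop := 0 < a < 1 /\ 0 < d.

Definition D_minus (g : R -> R -> R) (k : R) (a d : R) : Prop :=
  in_H a d /\
  exists A, a < A < 1 /\ Rbar_lt (d_diamond g k A a) (Finite d) /\ d < g A a / A.

Definition in_closure (S : R -> R -> Prop) (a d : R) : Prop :=
  forall eps, 0 < eps -> exists a' d', S a' d' /\ Rabs (a' - a) < eps /\ Rabs (d' - d) < eps.

From Stdlib Require Import Reals Rtopology ClassicalEpsilon Lra Psatz.
From Coquelicot Require Import Coquelicot.
Open Scope R_scope.

(* Passing to the limit along D^-(k) gives A in (a,1) with d A <= g(A;a) such that
   v |-> g(v;a) - d(k+1) v is minimal at A on [0,A].  Since g decreases strictly in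
   its parameter (Hg1), d A < g(A;a_low) and g(.;a_low) - d(k+1). stays above -dkA on
   [0,A].  Tilting the slope down to e = d(k+1) - mu for a small mu > 0, the minimiser
   of g(.;a_low) - e. on [0,A1], with A1 the first crossing of g(.;a_low) with the line
   (d+mu) v after A, lies beyond A; there d^diamond <= e/(k+1) < d, so it witnesses
   (a_low, d) in D^-(k). *)

Lemma continuity_pt_pos_near (f : R -> R) (z : R) :
  continuity_pt f z -> 0 < f z ->
  exists del, 0 < del /\ forall t, Rabs (t - z) < del -> 0 < f t.
Proof.
  intros Hc Hz. destruct (Hc (f z) Hz) as [del [Hdel Hnear]].
  exists del; split; [exact Hdel|]. intros t Ht.
  destruct (Req_dec t z) as [->|Hne]; [exact Hz|].
  assert (Hd : R_dist (f t) (f z) < f z) by (apply Hnear; repeat split; auto).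
  unfold R_dist in Hd. apply Rabs_def2 in Hd. lra.
Qed.

Lemma first_zero (f : R -> R) (x y : R) : x < y ->
  (forall z, x <= z <= y -> continuity_pt f z) -> 0 < f x -> f y < 0 ->
  exists z, x < z < y /\ f z = 0 /\ forall w, x <= w < z -> 0 < f w.
Proof.
  intros Hxy Hc Hfx Hfy.
  set (E := fun t => x <= t <= y /\ forall w, x <= w <= t -> 0 < f w).
  assert (Ex : E x) by (split; [lra | intros w Hw; replace w with x by lra; exact Hfx]).
  destruct (completeness E) as [z [Hub Hlub]];
    [exists y; intros t [Ht _]; lra | now exists x |].
  assert (Hxz : x <= z) by now apply Hub.
  assert (Hzy : z <= y) by (apply Hlub; intros t [Ht _]; lra).
  assert (Hpos : forall w, x <= w < z -> 0 < f w).
  { intros w Hw. apply Rnot_le_lt. intros Hfw.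
    assert (z <= w); [|lra]. apply Hlub. intros t [_ Hft].
    apply Rnot_lt_le. intros Hwt. assert (0 < f w) by (apply Hft; lra). lra. }
  assert (Hfz : f z = 0).
  { destruct (Rtotal_order (f z) 0) as [Hneg|[Hzero|Hposz]]; [exfalso | exact Hzero | exfalso].
    - destruct (continuity_pt_pos_near (fun t => - f t) z) as [del [Hdel Hnear]];
        [apply continuity_pt_opp, Hc; lra | lra |].
      assert (Hxz' : x < z) by (destruct (Req_dec x z) as [<-|]; lra).
      set (w := Rmax x (z - del / 2)).
      assert (Hxw : x <= w) by apply Rmax_l.
      assert (Hwz : z - del / 2 <= w) by apply Rmax_r.
      assert (Hw : w < z) by (unfold w; apply Rmax_lub_lt; lra).
      assert (0 < f w) by (apply Hpos; lra).
      assert (0 < - f w) by (apply Hnear; rewrite Rabs_left; lra). lra.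
    - destruct (continuity_pt_pos_near f z) as [del [Hdel Hnear]]; [apply Hc; lra | lra |].
      assert (Hzy' : z < y) by (destruct (Req_dec z y) as [->|]; lra).
      set (t := Rmin y (z + del / 2)).
      assert (Hty : t <= y) by apply Rmin_l.
      assert (Htz : t <= z + del / 2) by apply Rmin_r.
      assert (Hzt : z < t) by (unfold t; apply Rmin_glb_lt; lra).
      assert (Et : E t).
      { split; [lra|]. intros w Hw. destruct (Rlt_le_dec w z).
        - apply Hpos; lra.
        - apply Hnear. rewrite Rabs_right; lra. }
      specialize (Hub t Et). lra. }
  exists z. repeat split; auto.
  - destruct (Req_dec x z) as [<-|]; lra.
  - destruct (Req_dec z y) as [->|]; lra.
Qed.

Lemma inv_succ_pos (n : nat) : 0 < / (INR n + 1).
Proof. apply Rinv_0_lt_compat. pose proof (pos_INR n). lra. Qed.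

Lemma is_lim_seq_inv_succ_bound (u : nat -> R) (l : R) :
  (forall n, Rabs (u n - l) < / (INR n + 1)) -> is_lim_seq u l.
Proof.
  intros Hu. apply is_lim_seq_spec. intros eps.
  destruct (archimed_cor1 eps (cond_pos eps)) as [N [HN HN0]].
  exists N. intros n Hn. apply Rlt_trans with (1 := Hu n).
  apply Rle_lt_trans with (2 := HN). apply Rinv_le_contravar.
  - apply lt_0_INR. lia.
  - apply le_INR in Hn. lra.
Qed.

Lemma filterlim_ge_id (phi : nat -> nat) :
  (forall n, (n <= phi n)%nat) -> filterlim phi eventually eventually.
Proof.
  intros Hphi P [N HN]. exists N. intros n Hn. apply HN. specialize (Hphi n). lia.
Qed.

Lemma unit_interval_subseq (u : nat -> R) : (forall n, 0 <= u n <= 1) ->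
  exists (phi : nat -> nat) (l : R),
    filterlim phi eventually eventually /\ is_lim_seq (fun n => u (phi n)) l.
Proof.
  intros Hu.
  destruct (Bolzano_Weierstrass u (fun c => 0 <= c <= 1) (compact_P3 0 1) Hu) as [l Hl].
  assert (Hsel : forall n, exists p, (n <= p)%nat /\ Rabs (u p - l) < / (INR n + 1)).
  { intros n. apply (Hl (fun t => Rabs (t - l) < / (INR n + 1))).
    exists (mkposreal _ (inv_succ_pos n)). intros t Ht. exact Ht. }
  destruct (choice _ Hsel) as [phi Hphi].
  exists phi, l. split.
  - apply filterlim_ge_id. intros n. apply Hphi.
  - apply is_lim_seq_inv_succ_bound. intros n. apply Hphi.
Qed.

Lemma in_closure_seq (S : R -> R -> Prop) (a d : R) : in_closure S a d ->
  exists a_ d_ : nat -> R,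
    (forall n, S (a_ n) (d_ n)) /\ is_lim_seq a_ a /\ is_lim_seq d_ d.
Proof.
  intros Hcl.
  assert (Hsel : forall n, exists p : R * R,
    S (fst p) (snd p) /\ Rabs (fst p - a) < / (INR n + 1) /\ Rabs (snd p - d) < / (INR n + 1)).
  { intros n. destruct (Hcl _ (inv_succ_pos n)) as [a' [d' H]]. now exists (a', d'). }
  destruct (choice _ Hsel) as [p Hp].
  exists (fun n => fst (p n)), (fun n => snd (p n)). repeat split.
  - intros n. apply Hp.
  - apply is_lim_seq_inv_succ_bound. intros n. apply Hp.
  - apply is_lim_seq_inv_succ_bound. intros n. apply Hp.
Qed.

Lemma is_lim_seq_eventually_lt (u : nat -> R) (l c : R) :
  is_lim_seq u l -> c < l -> eventually (fun n => c < u n).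
Proof.
  intros Hu Hc. apply is_lim_seq_spec in Hu.
  destruct (Hu (mkposreal _ (proj2 (Rlt_0_minus _ _) Hc))) as [N HN].
  exists N. intros n Hn. specialize (HN n Hn). simpl in HN. apply Rabs_def2 in HN. lra.
Qed.

Section StripFunction.

Variable g : R -> R -> R.
Hypothesis HG : Hg g.

Lemma continuity_pt_section (b z : R) : 0 <= b <= 1 -> continuity_pt (fun v => g v b) z.
Proof.
  intros Hb eps Heps. destruct HG as [[Hc _] _].
  destruct (Hc z b Hb eps Heps) as [del [Hdel Hnear]].
  exists del; split; [exact Hdel|]. intros t [_ Ht]. apply Hnear; [exact Hb | exact Ht |].
  rewrite Rminus_eq_0, Rabs_R0. exact Hdel.
Qed.

Lemma is_lim_seq_strip (x_ b_ : nat -> R) (x b : R) :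
  (forall n, 0 <= b_ n <= 1) -> 0 <= b <= 1 ->
  is_lim_seq x_ x -> is_lim_seq b_ b -> is_lim_seq (fun n => g (x_ n) (b_ n)) (g x b).
Proof.
  intros Hbn Hb Hx Hb'. apply is_lim_seq_spec in Hx, Hb'. apply is_lim_seq_spec.
  intros eps. destruct HG as [[Hc _] _].
  destruct (Hc x b Hb eps (cond_pos eps)) as [del [Hdel Hnear]].
  generalize (filter_and _ _ (Hx (mkposreal _ Hdel)) (Hb' (mkposreal _ Hdel))).
  apply filter_imp. intros n [Hxn Hbn']. now apply Hnear.
Qed.

Lemma g_lt_of_param_lt (v b1 b2 : R) :
  Hg1 g -> 0 < b1 < b2 -> b2 < 1 -> 0 < v < 1 -> g v b2 < g v b1.
Proof.
  intros H1 Hb Hb2 Hv. destruct HG as [[_ [_ [ga [_ [_ Hda]]]]] _].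
  destruct (MVT_cor2 (fun b => g v b) (ga v) b1 b2) as [c [Hc Hcint]]; [lra| |].
  - intros c Hc. apply is_derive_Reals, Hda. lra.
  - assert (Hneg : ga v c < 0).
    { rewrite <- (is_derive_unique (fun b => g v b) c (ga v c)) by (apply Hda; lra).
      apply H1; lra. }
    assert (ga v c * (b2 - b1) < 0) by (apply Rmult_neg_pos; lra). lra.
Qed.

Lemma g_le_of_param_lt (v b1 b2 : R) :
  Hg1 g -> 0 < b1 < b2 -> b2 < 1 -> 0 <= v <= 1 -> g v b2 <= g v b1.
Proof.
  intros H1 Hb Hb2 Hv. destruct HG as [_ Hzeros].
  destruct (Hzeros b1) as [E01 [_ [E11 _]]]; [lra|].
  destruct (Hzeros b2) as [E02 [_ [E12 _]]]; [lra|].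
  destruct (Req_dec v 0) as [->|Hv0]; [lra|].
  destruct (Req_dec v 1) as [->|Hv1]; [lra|].
  left. apply g_lt_of_param_lt; auto; lra.
Qed.

End StripFunction.

Definition diamond_admissible (g : R -> R -> R) (k a A d : R) : Prop :=
  forall v, 0 <= v <= A -> d * (k + 1) * (A - v) - g A a >= - g v a.

Lemma diamond_admissible_le (g : R -> R -> R) (k a A d1 d2 : R) :
  0 <= k + 1 -> d1 <= d2 -> diamond_admissible g k a A d1 -> diamond_admissible g k a A d2.
Proof.
  intros Hk Hd Hadm v Hv. specialize (Hadm v Hv).
  assert (d1 * (k + 1) * (A - v) <= d2 * (k + 1) * (A - v)).
  { apply Rmult_le_compat_r; [lra|]. now apply Rmult_le_compat_r. }
  lra.
Qed.

Lemma Glb_Rbar_lt (E : R -> Prop) (x : R) :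
  Rbar_lt (Glb_Rbar E) x -> exists y, E y /\ y < x.
Proof.
  intros Hlt. apply Classical_Prop.NNPP. intros Hno.
  apply (Rbar_lt_not_le _ _ Hlt). apply (Glb_Rbar_correct E). intros y Hy.
  apply Rnot_lt_le. intros Hyx. apply Hno. now exists y.
Qed.

Lemma D_minus_witness (g : R -> R -> R) (k a d : R) : 0 <= k + 1 -> D_minus g k a d ->
  exists A, a < A < 1 /\ d * A < g A a /\ diamond_admissible g k a A d.
Proof.
  intros Hk [[Ha Hd] [A [HA [Hdiam Hslope]]]].
  destruct (Glb_Rbar_lt _ _ Hdiam) as [d' [[_ Hadm] Hd'd]].
  exists A. repeat split; try lra.
  - apply Rlt_div_r in Hslope; lra.
  - apply (diamond_admissible_le g k a A d'); auto; lra.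
Qed.

Lemma D_minus_of_minimizer (g : R -> R -> R) (k a d A e : R) :
  0 < k -> 0 < a < 1 -> 0 < d -> a < A < 1 -> d * A < g A a -> 0 < e < d * (k + 1) ->
  (forall v, 0 <= v <= A -> g A a - e * A <= g v a - e * v) -> D_minus g k a d.
Proof.
  intros Hk Ha Hd HA Hslope He Hmin.
  split; [split; lra|]. exists A. repeat split; try lra.
  - apply Rbar_le_lt_trans with (e / (k + 1)).
    + apply (Glb_Rbar_correct _). split.
      * apply Rdiv_lt_0_compat; lra.
      * intros v Hv. replace (e / (k + 1) * (k + 1)) with e by (field; lra).
        specialize (Hmin v Hv). lra.
    + simpl. apply Rlt_div_l; lra.
  - apply Rlt_div_r; lra.
Qed.

Lemma witness_limit (g : R -> R -> R) (k : R) (a_ d_ A_ : nat -> R) (a d l : R) : Hg g ->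
  (forall n, 0 < a_ n < 1 /\ a_ n < A_ n < 1 /\ d_ n * A_ n < g (A_ n) (a_ n) /\
             diamond_admissible g k (a_ n) (A_ n) (d_ n)) ->
  0 <= a <= 1 -> is_lim_seq a_ a -> is_lim_seq d_ d -> is_lim_seq A_ l ->
  a <= l <= 1 /\ d * l <= g l a /\ diamond_admissible g k a l d.
Proof.
  intros HG Hn Ha Hlima Hlimd HlimA.
  assert (Ha_ : forall n, 0 <= a_ n <= 1) by (intros n; specialize (Hn n); lra).
  assert (HlimgA : is_lim_seq (fun n => g (A_ n) (a_ n)) (g l a))
    by now apply is_lim_seq_strip.
  split; [split|split].
  - apply (is_lim_seq_le a_ A_ a l); auto. intros n. specialize (Hn n). lra.
  - apply (is_lim_seq_le A_ (fun _ => 1) l 1); auto using is_lim_seq_const.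
    intros n. specialize (Hn n). lra.
  - apply (is_lim_seq_le (fun n => d_ n * A_ n) (fun n => g (A_ n) (a_ n)) (d * l) (g l a));
      auto.
    + intros n. specialize (Hn n). lra.
    + now apply is_lim_seq_mult'.
  - intros v Hv. destruct (Req_dec v l) as [->|Hvl]; [rewrite Rminus_eq_0; lra|].
    assert (Hle : Rbar_le (g l a - g v a) (d * (k + 1) * (l - v))).
    { apply (is_lim_seq_le_loc (fun n => g (A_ n) (a_ n) - g v (a_ n))
                               (fun n => d_ n * (k + 1) * (A_ n - v))).
      - generalize (is_lim_seq_eventually_lt A_ l v HlimA ltac:(lra)).
        apply filter_imp. intros n Hvn. destruct (Hn n) as [_ [_ [_ Hadm]]].
        specialize (Hadm v ltac:(lra)). lra.
      - apply is_lim_seq_minus'; auto. apply is_lim_seq_strip; auto using is_lim_seq_const.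
      - apply is_lim_seq_mult'; [apply is_lim_seq_mult'|apply is_lim_seq_minus'];
          auto using is_lim_seq_const. }
    simpl in Hle. lra.
Qed.

Lemma closure_witness (g : R -> R -> R) (k a d : R) : Hg g -> 0 < k ->
  in_closure (D_minus g k) a d -> in_H a d ->
  exists A, a < A < 1 /\ d * A <= g A a /\ diamond_admissible g k a A d.
Proof.
  intros HG Hk Hcl [Ha Hd].
  destruct (in_closure_seq _ _ _ Hcl) as [a_ [d_ [HD [Hlima Hlimd]]]].
  assert (Hsel : forall n, exists A, 0 < a_ n < 1 /\ a_ n < A < 1 /\
           d_ n * A < g A (a_ n) /\ diamond_admissible g k (a_ n) A (d_ n)).
  { intros n. destruct (HD n) as [[Han _] _].
    destruct (D_minus_witness g k (a_ n) (d_ n)) as [A HA]; [lra | apply HD | now exists A]. }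
  destruct (choice _ Hsel) as [A_ HA_].
  destruct (unit_interval_subseq A_) as [phi [l [Hphi HlimA]]];
    [intros n; specialize (HA_ n); lra|].
  destruct (witness_limit g k (fun n => a_ (phi n)) (fun n => d_ (phi n))
                                (fun n => A_ (phi n)) a d l)
    as [Hl [Hslope Hadm]]; auto using is_lim_seq_subseq; [lra|].
  exists l. destruct HG as [_ Hzeros]. destruct (Hzeros a Ha) as [_ [Eaa [E1a _]]].
  repeat split; auto.
  - destruct (Req_dec a l) as [<-|]; [|lra]. rewrite Eaa in Hslope. nra.
  - destruct (Req_dec l 1) as [->|]; [|lra]. rewrite E1a in Hslope. lra.
Qed.

Section Crossing.

Variable h : R -> R.
Hypothesis h_cont : forall y, 0 <= y <= 1 -> continuity_pt h y.
Hypothesis h1 : h 1 = 0.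

Lemma continuity_pt_sub_linear (c y : R) :
  0 <= y <= 1 -> continuity_pt (fun t => h t - c * t) y.
Proof.
  intros Hy. apply continuity_pt_minus; [now apply h_cont|].
  apply continuity_pt_scal, derivable_continuous_pt, derivable_pt_id.
Qed.

Lemma first_crossing (c A : R) : 0 <= A < 1 -> 0 < c -> c * A < h A ->
  exists z, A < z < 1 /\ h z = c * z /\ forall w, A <= w < z -> c * w < h w.
Proof.
  intros HA Hc HcA.
  destruct (first_zero (fun t => h t - c * t) A 1) as [z [Hz [Hhz Hpos]]];
    [lra | intros; apply continuity_pt_sub_linear; lra | lra | rewrite h1; lra |].
  exists z. repeat split; try lra. intros w Hw. specialize (Hpos w Hw). lra.
Qed.

Lemma slack_crossing (d k A : R) : 0 < d -> 0 < k -> 0 < A < 1 -> d * A < h A ->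
  exists mu A1, 0 < mu /\ A < A1 < 1 /\ h A1 = (d + mu) * A1 /\
    (forall w, A <= w < A1 -> (d + mu) * w < h w) /\ 2 * mu * A1 < d * k * (A1 - A).
Proof.
  intros Hd Hk HA HdA.
  set (mu0 := (h A - d * A) / 2).
  destruct (first_crossing (d + mu0) A) as [B [HB [HhB HposB]]];
    [lra | unfold mu0; lra | unfold mu0; nra |].
  (* B is a lower bound for every later crossing A1, so mu can be fixed before A1. *)
  set (mu := Rmin mu0 (d * k * (B - A) / (4 * B))).
  assert (Hmu0 : mu <= mu0) by apply Rmin_l.
  assert (HmuB : 4 * B * mu <= d * k * (B - A)).
  { assert (Hmin : mu <= d * k * (B - A) / (4 * B)) by apply Rmin_r.
    apply Rle_div_r in Hmin; lra. }
  assert (Hmu : 0 < mu).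
  { apply Rmin_glb_lt; [unfold mu0; lra|]. apply Rdiv_lt_0_compat; [|lra].
    apply Rmult_lt_0_compat; [nra | lra]. }
  destruct (first_crossing (d + mu) A) as [A1 [HA1 [HhA1 HposA1]]];
    [lra | lra | unfold mu0 in *; nra |].
  assert (HBA1 : B <= A1).
  { apply Rnot_lt_le. intros HA1B. specialize (HposB A1 ltac:(lra)). nra. }
  exists mu, A1. repeat split; auto; try lra.
  assert (Hdk : 0 < d * k) by nra.
  assert (HmuA1 : 4 * B * mu * A1 <= d * k * (B - A) * A1) by (apply Rmult_le_compat_r; lra).
  assert (Hratio : d * k * ((B - A) * A1) <= d * k * ((A1 - A) * B))
    by (apply Rmult_le_compat_l; nra).
  assert (Hgap : 0 < d * k * ((A1 - A) * B)) by (apply Rmult_lt_0_compat; nra).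
  apply Rmult_lt_reg_l with (2 * B); [lra|].
  replace (2 * B * (2 * mu * A1)) with (4 * B * mu * A1) by ring.
  replace (2 * B * (d * k * (A1 - A))) with (2 * (d * k * ((A1 - A) * B))) by ring.
  replace (d * k * (B - A) * A1) with (d * k * ((B - A) * A1)) in HmuA1 by ring.
  lra.
Qed.

Lemma crossing_minimizer (d k A mu A1 : R) :
  0 < d -> 0 < k -> 0 <= A -> 0 < mu -> A < A1 < 1 ->
  h A1 = (d + mu) * A1 -> (forall w, A <= w < A1 -> (d + mu) * w < h w) ->
  2 * mu * A1 < d * k * (A1 - A) ->
  (forall v, 0 <= v <= A -> - (d * k * A) <= h v - d * (k + 1) * v) ->
  exists As, A < As < 1 /\ d * As < h As /\
    forall v, 0 <= v <= As ->
      h As - (d * (k + 1) - mu) * As <= h v - (d * (k + 1) - mu) * v.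
Proof.
  intros Hd Hk HA Hmu HA1 HhA1 Hpos Hslack Hlow.
  set (e := d * (k + 1) - mu).
  destruct (continuity_ab_min (fun t => h t - e * t) 0 A1) as [As [Hmin HAs]];
    [lra | intros; apply continuity_pt_sub_linear; lra |].
  (* On [0,A] the tilted function stays above -dkA, at A1 it is already below. *)
  assert (HAAs : A < As).
  { apply Rnot_le_lt. intros HAsA.
    specialize (Hmin A1 ltac:(lra)). specialize (Hlow As ltac:(lra)).
    unfold e in Hmin. nra. }
  exists As. repeat split; try lra.
  - destruct (Req_dec As A1) as [->|HAsA1]; [nra|].
    specialize (Hpos As ltac:(lra)). nra.
  - intros v Hv. apply (Hmin v). lra.
Qed.

End Crossing.

Theorem lemma5p4 (g : R -> R -> R) (k : R) :
  Hg g -> Hg1 g -> 0 < k ->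
  forall a d, in_closure (D_minus g k) a d -> in_H a d ->
  forall a_low, 0 < a_low < a -> D_minus g k a_low d.
Proof.
  intros HG H1 Hk a d Hcl HaH a_low Hal.
  destruct (closure_witness g k a d HG Hk Hcl HaH) as [A [HA [HdA Hadm]]].
  destruct HaH as [Ha Hd].
  set (h := fun v => g v a_low).
  assert (h_cont : forall y, 0 <= y <= 1 -> continuity_pt h y)
    by (intros; apply continuity_pt_section; auto; lra).
  assert (h1 : h 1 = 0) by apply (proj2 HG a_low ltac:(lra)).
  assert (HhA : d * A < h A).
  { assert (g A a < g A a_low) by (apply g_lt_of_param_lt; auto; lra). unfold h. lra. }
  assert (Hlow : forall v, 0 <= v <= A -> - (d * k * A) <= h v - d * (k + 1) * v).
  { intros v Hv. specialize (Hadm v Hv).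
    assert (g v a <= g v a_low) by (apply g_le_of_param_lt; auto; lra). unfold h. lra. }
  destruct (slack_crossing h h_cont h1 d k A)
    as [mu [A1 [Hmu [HA1 [HhA1 [Hpos Hslack]]]]]]; auto; [lra|].
  destruct (crossing_minimizer h h_cont d k A mu A1) as [As [HAs [HhAs Hmin]]]; auto; [lra|].
  apply (D_minus_of_minimizer g k a_low d As (d * (k + 1) - mu)); auto; try lra. nra.
Qed.
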